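(* Let $n\geq 3$, $k\in\mathbb{Z}_n$ with $k\neq 0$ and $2k\not\equiv 0\pmod n$, and let $C$ be a total perfect code in $\mathrm{GP}(n,k)$ such that $u_\ell,u_{\ell+1}\in C$ for some $\ell\in\mathbb{Z}_n$. Then $u_{\ell+6},u_{\ell+7}\in C$; consequently $n\equiv 0\pmod 6$ and $C\cap U=\{u_{\ell+6i},u_{\ell+6i+1}\mid i\in\mathbb{Z}_n\}$.
   Context: For an integer $n\geq 3$ and a nonzero $k\in\mathbb{Z}_n$, the generalized Petersen graph $\mathrm{GP}(n,k)$ is the simple graph with vertex set $\{u_i,v_i\mid i\in\mathbb{Z}_n\}$ and edges $u_iu_{i+1}$, $u_iv_i$, $v_iv_{i+k}$ for all $i\in\mathbb{Z}_n$ (indices modulo $n$). Let $U=\{u_i\mid i\in\mathbb{Z}_n\}$. A total perfect code in a graph $\Gamma$ is a set $C\subseteq V(\Gamma)$ such that every vertex of $\Gamma$ is adjacent to exactly one vertex of $C$. *)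

From mathcomp Require Import all_boot all_order all_algebra.
Set Implicit Arguments. Unset Strict Implicit. Unset Printing Implicit Defensive.
Import GRing.Theory.
Local Open Scope ring_scope.

(* Vertices of GP(n,k): inl i = u_i, inr i = v_i, i in Z_n (use only for n >= 2). *)
Definition gpvert (n : nat) : finType := ('Z_n + 'Z_n)%type.

Definition gp_adj (n : nat) (k : 'Z_n) (x y : gpvert n) : bool :=
  match x, y with
  | inl i, inl j => (j == i + 1) || (i == j + 1)
  | inl i, inr j => i == j
  | inr i, inl j => i == j
  | inr i, inr j => (j == i + k) || (i == j + k)
  end.

Definition outerU (n : nat) : {set gpvert n} :=
  [set x : gpvert n | if x is inl _ then true else false].

Definition total_perfect_code (n : nat) (k : 'Z_n) (C : {set gpvert n}) : Prop :=
  forall x : gpvert n, #|[set y in C | gp_adj k x y]| = 1%N.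

From mathcomp Require Import all_boot all_order all_algebra.
From mathcomp Require Import zify ring.
Import GRing.Theory.
Set Implicit Arguments.
Unset Strict Implicit.
Unset Printing Implicit Defensive.

Local Open Scope ring_scope.

(* Two spokes v_(i-1), v_(i+1) are never both in C: otherwise none of u_(i-1+-k),
   u_(i+1+-k) is in C, which forces v_(i+k) and v_(i-k) into C, two C-neighbours
   of v_i.  Hence, if v_(i-1), v_(i+1) are not in C, neither is v_(i+-k) (else
   v_(i-1+-2k), v_(i+1+-2k) would both be in C), so u_i is in C.  Starting from
   u_l, u_(l+1) in C: u_(l+2), u_(l+3), v_(l+1), v_(l+2) are not in C, so
   v_(l+3), v_(l+4) are, so u_(l+4), u_(l+5), v_(l+5), v_(l+6) are not, so
   u_(l+6), u_(l+7) are.  Iterating gives a pair every 6 steps and nothing in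
   between; as u_(l+n) = u_l, this also forces 6 | n. *)

Lemma card_set_mem3 (T : finType) (C : {set T}) (P : pred T) (x y z : T) :
  uniq [:: x; y; z] -> P =i [:: x; y; z] ->
  #|[set w in C | P w]| = ((x \in C) + (y \in C) + (z \in C))%N.
Proof.
move=> uniq_xyz P_xyz.
rewrite -[RHS]addn0 -!addnA (_ : (_ + _)%N = count (mem C) [:: x; y; z]) //.
rewrite -size_filter -(card_uniqP (filter_uniq _ uniq_xyz)).
apply: eq_card => w.
by rewrite inE mem_filter -P_xyz.
Qed.

Lemma natr_Zp_two_neq0 n : (3 <= n)%N -> (2%:R : 'Z_n) != 0.
Proof.
move=> n_ge3; apply/eqP => /(congr1 val).
by rewrite Zp_nat /= Zp_cast ?modn_small //; lia.
Qed.

Lemma subr_neq_addr (R : zmodType) (x y : R) : y *+ 2 != 0 -> x - y != x + y.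
Proof. by apply: contra => /eqP/addrI/eqP; rewrite eq_sym -subr_eq0 opprK -mulr2n. Qed.

Section TotalPerfectCode.

Variables (n : nat) (k : 'Z_n) (C : {set gpvert n}).
Hypotheses (n_ge3 : (3 <= n)%N) (k2_neq0 : k *+ 2 != 0).
Hypothesis codeC : total_perfect_code k C.

Local Notation u i := (inl i%R : gpvert n).
Local Notation v i := (inr i%R : gpvert n).

Lemma outer_nbrs_count i :
  ((u (i - 1) \in C) + (u (i + 1) \in C) + (v i \in C))%N = 1%N.
Proof.
rewrite -(codeC (u i)); symmetry; apply: card_set_mem3.
  rewrite /= !inE -!sum_eqE /= orbF andbT.
  by apply: subr_neq_addr; apply: natr_Zp_two_neq0.
case=> j; rewrite unfold_in !inE -!sum_eqE /= ?orbF; last exact: eq_sym.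
by rewrite orbC -subr_eq eq_sym.
Qed.

Lemma inner_nbrs_count i :
  ((u i \in C) + (v (i - k) \in C) + (v (i + k) \in C))%N = 1%N.
Proof.
rewrite -(codeC (v i)); symmetry; apply: card_set_mem3.
  rewrite /= !inE -!sum_eqE /= andbT.
  by apply: subr_neq_addr.
case=> j; rewrite unfold_in !inE -!sum_eqE /= ?orbF; first exact: eq_sym.
by rewrite orbC -subr_eq eq_sym.
Qed.

Lemma outer_nbr_pred i : u (i - 1) \in C -> (u (i + 1) \notin C) && (v i \notin C).
Proof. by move: (outer_nbrs_count i); do 3!case: (_ \in C). Qed.

Lemma outer_nbr_spoke i : v i \in C -> (u (i - 1) \notin C) && (u (i + 1) \notin C).
Proof. by move: (outer_nbrs_count i); do 3!case: (_ \in C). Qed.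

Lemma outer_nbr_succ i : u (i - 1) \notin C -> v i \notin C -> u (i + 1) \in C.
Proof. by move: (outer_nbrs_count i); do 3!case: (_ \in C). Qed.

Lemma outer_nbr_spoke_forced i :
  u (i - 1) \notin C -> u (i + 1) \notin C -> v i \in C.
Proof. by move: (outer_nbrs_count i); do 3!case: (_ \in C). Qed.

Lemma inner_nbr_spoke i : v i \in C -> (u (i - k) \notin C) && (u (i + k) \notin C).
Proof.
move=> vi; move: (inner_nbrs_count (i - k)) (inner_nbrs_count (i + k)).
by rewrite subrK addrK vi; do 4!case: (_ \in C).
Qed.

Lemma inner_nbr_forced i : u i \notin C -> v (i - k) \notin C -> v (i + k) \in C.
Proof. by move: (inner_nbrs_count i); do 3!case: (_ \in C). Qed.

Lemma spokes_apart2 i : v (i - 1) \in C -> v (i + 1) \notin C.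
Proof.
move=> /inner_nbr_spoke/andP[ul_minus ul_plus].
apply/negP => /inner_nbr_spoke/andP[ur_minus ur_plus].
have vik : v (i + k) \in C.
  by apply: outer_nbr_spoke_forced; rewrite addrAC.
have vi_k : v (i - k) \in C.
  by apply: outer_nbr_spoke_forced; rewrite addrAC.
by move: (inner_nbrs_count i); rewrite vik vi_k; case: (_ \in C).
Qed.

Lemma spoke_shadow i : v (i - 1) \notin C -> v (i + 1) \notin C -> v (i + k) \notin C.
Proof.
move=> vl vr; apply/negP => /outer_nbr_spoke/andP[ul ur].
have vl2 : v (i - 1 + k + k) \in C.
  by apply: inner_nbr_forced; rewrite ?addrK // addrAC.
have vr2 : v (i + 1 + k + k) \in C.
  by apply: inner_nbr_forced; rewrite ?addrK // addrAC.
move: vl2 vr2.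
have -> : i - 1 + k + k = i + k + k - 1 by ring.
have -> : i + 1 + k + k = i + k + k + 1 by ring.
by move=> /spokes_apart2/negP.
Qed.

End TotalPerfectCode.

Lemma gp_adj_opp n (k : 'Z_n) : gp_adj (- k) =2 gp_adj k.
Proof.
case=> i [j|j] //=.
by rewrite [j == _]eq_sym [i == _]eq_sym !subr_eq orbC.
Qed.

Lemma total_perfect_code_opp n (k : 'Z_n) (C : {set gpvert n}) :
  total_perfect_code k C -> total_perfect_code (- k) C.
Proof.
by move=> codeC x; rewrite -(codeC x); apply: eq_card => y; rewrite !inE gp_adj_opp.
Qed.

Section OuterPairs.

Variables (n : nat) (k : 'Z_n) (C : {set gpvert n}).
Hypotheses (n_ge3 : (3 <= n)%N) (k2_neq0 : k *+ 2 != 0).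
Hypothesis codeC : total_perfect_code k C.

Local Notation u i := (inl i%R : gpvert n).
Local Notation v i := (inr i%R : gpvert n).

Lemma spoke_after_gap i : u i \notin C -> v (i - 1) \notin C -> v (i + 1) \in C.
Proof.
move=> ui vl; apply/negPn/negP => vr.
have vik := spoke_shadow n_ge3 k2_neq0 codeC vl vr.
have k2N_neq0 : (- k) *+ 2 != 0 by rewrite mulNrn oppr_eq0.
have vi_k := spoke_shadow n_ge3 k2N_neq0 (total_perfect_code_opp codeC) vl vr.
by move: (inner_nbrs_count k2_neq0 codeC i) ui vik vi_k; do 3!case: (_ \in C).
Qed.

Lemma outer_pair_next b : u b \in C -> u (b + 1) \in C ->
  [/\ u (b + 6%:R) \in C, u (b + 7%:R) \in C &
      forall j, (2 <= j <= 5)%N -> u (b + j%:R) \notin C].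
Proof.
move=> u0 u1; pose p j := b + j%:R.
have pS j : p j + 1 = p j.+1 by rewrite -addrA natr1.
have pP j : p j.+1 - 1 = p j by rewrite -pS addrK.
have u0' : u (p 0) \in C by rewrite /p addr0.
have := outer_nbr_pred n_ge3 codeC (i := p 1); rewrite pP pS.
case/(_ u0')/andP => u2 v1.
have := outer_nbr_pred n_ge3 codeC (i := p 2); rewrite pP pS.
case/(_ u1)/andP => u3 v2.
have := spoke_after_gap (i := p 2); rewrite pP pS => /(_ u2 v1) v3.
have := spoke_after_gap (i := p 3); rewrite pP pS => /(_ u3 v2) v4.
have /andP[_] := outer_nbr_spoke n_ge3 codeC v3; rewrite pS => u4.
have /andP[_] := outer_nbr_spoke n_ge3 codeC v4; rewrite pS => u5.
have := spokes_apart2 n_ge3 k2_neq0 codeC (i := p 4); rewrite pP pS => /(_ v3) v5.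
have := spokes_apart2 n_ge3 k2_neq0 codeC (i := p 5); rewrite pP pS => /(_ v4) v6.
have := outer_nbr_succ n_ge3 codeC (i := p 5); rewrite pP pS => /(_ u4 v5) u6.
have := outer_nbr_succ n_ge3 codeC (i := p 6); rewrite pP pS => /(_ u5 v6) u7.
by split=> // -[|[|[|[|[|[|j]]]]]].
Qed.

Lemma outer_pairs_every6 l : u l \in C -> u (l + 1) \in C ->
  forall i : nat, u (l + i%:R *+ 6) \in C /\ u (l + i%:R *+ 6 + 1) \in C.
Proof.
move=> ul ul1; elim=> [|i [ui ui1]]; first by rewrite mul0rn addr0.
have [u6 u7 _] := outer_pair_next ui ui1.
by rewrite -natr1 mulrnDl addrA -[_ + 1 *+ 6 + 1]addrA natr1.
Qed.

Lemma outer_offset_mod6 l d : u l \in C -> u (l + 1) \in C ->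
  u (l + d%:R) \in C -> (d %% 6 <= 1)%N.
Proof.
move=> ul ul1; have [uq uq1] := outer_pairs_every6 ul ul1 (d %/ 6).
have [_ _ gap_free] := outer_pair_next uq uq1.
rewrite leqNgt; apply: contraL => r_gt1.
have := gap_free (d %% 6)%N; rewrite r_gt1 -ltnS ltn_mod => /(_ isT).
by rewrite -addrA -mulr_natr -natrM -natrD -divn_eq.
Qed.

Lemma outer_code_pairs6 l : u l \in C -> u (l + 1) \in C ->
  C :&: outerU n =
    [set u (l + i *+ 6) | i : 'Z_n] :|: [set u (l + i *+ 6 + 1) | i : 'Z_n].
Proof.
move=> ul ul1; have pairs := outer_pairs_every6 ul ul1.
apply/setP => -[y|y]; rewrite !inE /= ?andbT ?andbF; last first.
  by apply/esym/negP => /orP[] /imsetP[].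
apply/idP/orP => [uy | [] /imsetP[i _ ->]]; last 2 first.
- by rewrite -(natr_Zp i); case: (pairs i).
- by rewrite -(natr_Zp i); case: (pairs i).
pose d := val (y - l); have ey : y = l + d%:R by rewrite natr_Zp addrC subrK.
have := outer_offset_mod6 ul ul1 (d := d); rewrite -ey => /(_ uy).
have -> : y = l + (d %/ 6)%:R *+ 6 + (d %% 6)%N%:R.
  by rewrite ey {1}(divn_eq d 6) natrD natrM mulr_natr addrA.
case: (d %% 6)%N => [|[|]] // _; [left; rewrite addr0 | right];
  exact: imset_f.
Qed.

End OuterPairs.

Theorem mainTheorem9 (n : nat) (k : 'Z_n) (C : {set gpvert n}) (l : 'Z_n) :
  (3 <= n)%N -> k != 0 -> k *+ 2 != 0 ->
  total_perfect_code k C ->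
  (inl l : gpvert n) \in C -> (inl (l + 1) : gpvert n) \in C ->
  [/\ (inl (l + 6%:R) : gpvert n) \in C,
      (inl (l + 7%:R) : gpvert n) \in C,
      (6 %| n)%N &
      C :&: outerU n =
        [set (inl (l + i *+ 6) : gpvert n) | i : 'Z_n]
        :|: [set (inl (l + i *+ 6 + 1) : gpvert n) | i : 'Z_n]].
Proof.
(* [k != 0] is implied by [k *+ 2 != 0]. *)
move=> n_ge3 _ k2_neq0 codeC ul ul1.
have [ul6 ul7 _] := outer_pair_next n_ge3 k2_neq0 codeC ul ul1.
have offset_mod6 := outer_offset_mod6 n_ge3 k2_neq0 codeC ul ul1.
have n_eq0 : (n%:R : 'Z_n) = 0 by apply: pchar_Zp; lia.
have n_mod6 : (n %% 6 <= 1)%N by apply: offset_mod6; rewrite n_eq0 addr0.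
have n1_mod6 : (n.+1 %% 6 <= 1)%N.
  by apply: offset_mod6; rewrite -natr1 n_eq0 add0r.
split=> //; first lia.
apply: (outer_code_pairs6 n_ge3 k2_neq0 codeC ul ul1).
Qed.
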